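(* Let $y,l,u\in\mathcal{R}(\mathbb{R}^{+},\mathbb{R})$ be such that $l\leq u$, $l_0\leq y_0\leq u_0$, and $\inf_{s\leq t}(u_s-l_s)>0$ for every $t\geq 0$. Let $(x,k)$ with $k=\phi^1-\phi^2$ and $(\tilde{x},\tilde{k})$ with $\tilde{k}=\tilde{\phi}^1-\tilde{\phi}^2$ be two solutions of the reflection problem $RP^u_l(y)$. Then: (i) $\{t:\Delta^{+}\phi^1_t>0\}\cap\{t:\Delta^{+}\phi^2_t>0\}=\emptyset$; (ii) $\{t:\Delta^{+}\phi^1_t>0\}=\{t:\Delta^{+}\tilde{\phi}^1_t>0\}$ and $\{t:\Delta^{+}\phi^2_t>0\}=\{t:\Delta^{+}\tilde{\phi}^2_t>0\}$.
   Context: A function $f:\mathbb{R}^+=[0,\infty)\to\mathbb{R}$ is regulated if it has a left limit $f_{t^-}$ at every $t>0$ and a right limit $f_{t^+}$ at every $t\geq0$; $\mathcal{R}(\mathbb{R}^{+},\mathbb{R})$ is the set of regulated functions. Write $\Delta^+f_t=f_{t^+}-f_t$, $\Delta^-f_t=f_t-f_{t^-}$, $a\wedge b=\min(a,b)$, $a\vee b=\max(a,b)$. A regulated function $\phi$ of bounded variation (on every $[0,t]$) decomposes as $\phi_t=\phi^c_t+\sum_{0<s\leq t}\Delta^-\phi_s+\sum_{0\leq s<t}\Delta^+\phi_s$ with $\phi^c$ continuous; its right-continuous part is $\phi^r_t=\phi^c_t+\sum_{0<s\leq t}\Delta^-\phi_s$. Reflection problem $RP^u_l(y)$: for $y,l,u\in\mathcal{R}(\mathbb{R}^{+},\mathbb{R})$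 with $l_0\leq y_0\leq u_0$, a pair $(x,k)$ of regulated functions is a solution if there exist $\phi^1,\phi^2$ such that: (i) $x=y+k=y+\phi^1-\phi^2$; (ii) $l\leq x\leq u$; (iii) $\phi^1,\phi^2$ are non-decreasing with $\phi^1_0=\phi^2_0=0$; (iv) $\int_{[0,\infty[}\big((x_s-l_s)\wedge(x_{s^+}-l_{s^+})\big)\,d\phi^{1,r}_s=\int_{[0,\infty[}\big((u_s-x_s)\wedge(u_{s^+}-x_{s^+})\big)\,d\phi^{2,r}_s=0$; (v) for every $t\geq0$, $\sum_{s\leq t}(x_{s^+}-l_{s^+})\Delta^+\phi^1_s=\sum_{s\leq t}(u_s-x_s)\Delta^+\phi^1_s=0$ and $\sum_{s\leq t}(u_{s^+}-x_{s^+})\Delta^+\phi^2_s=\sum_{s\leq t}(x_s-l_s)\Delta^+\phi^2_s=0$. Here $\phi^{i,r}$ is the right-continuous part of $\phi^i$. *)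

From HB Require Import structures.
From mathcomp Require Import all_boot all_order all_algebra.
From mathcomp Require Import all_classical all_reals all_analysis.
Set Implicit Arguments. Unset Strict Implicit. Unset Printing Implicit Defensive.
Import Order.TTheory GRing.Theory Num.Theory.
Import numFieldNormedType.Exports.
Local Open Scope classical_set_scope.
Local Open Scope ring_scope.

Section Defs.
Variable R : realType.

(* Functions on R^+ = [0,oo) are represented as functions R -> R whose
   values on negative reals are irrelevant. *)

Definition itv_co (t : R) : set R := `[0, t[.
Definition itv_cc (t : R) : set R := `[0, t].
Definition itv_pos : set R := `[0, +oo[.

Definition regulated (f : R -> R) : Prop :=
  (forall t, 0 <= t -> cvg (f @ at_right t)) /\
  (forall t, 0 < t -> cvg (f @ at_left t)).

Definition rlim (f : R -> R) (t : R) : R := lim (f @ at_right t).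

Definition dplus (f : R -> R) (t : R) : R := rlim f t - f t.

Definition nondecr0 (f : R -> R) : Prop :=
  forall s t, 0 <= s -> s <= t -> f s <= f t.

(* right-continuous part of a non-decreasing phi with phi_0 = 0:
   phi^r_t = phi^c_t + sum_{0<s<=t} Delta^- phi_s
           = phi_t - sum_{0<=s<t} Delta^+ phi_s   (t >= 0),
   extended by 0 on the negative half-line. *)
Definition rcpart (phi : R -> R) (t : R) : R :=
  if t < 0 then 0
  else phi t - fine (\esum_(s in (itv_co t)) (dplus phi s)%:E)%E.

Definition mkcum (F : R -> R) (H1 : {homo F : x y / x <= y})
  (H2 : forall x, F @ at_right x --> F x) : cumulative R R :=
  HB.pack F (isCumulative.Build R _ R F H1 H2).

Definition stieltjes_int_zero (F : R -> R) (g : R -> R) : Prop :=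
  exists (H1 : {homo F : x y / x <= y})
         (H2 : forall x, F @ at_right x --> F x),
    (\int[lebesgue_stieltjes_measure (mkcum H1 H2)]_(s in itv_pos) (g s)%:E
      = 0)%E.

Definition sum_upto_zero (h : R -> R) (t : R) : Prop :=
  (\esum_(s in (itv_cc t)) (h s)%:E = 0)%E.

Definition RP_sol (y l u x k phi1 phi2 : R -> R) : Prop :=
  (regulated x /\ regulated k) /\
  (forall t, 0 <= t -> x t = y t + k t /\ k t = phi1 t - phi2 t) /\
  (forall t, 0 <= t -> l t <= x t /\ x t <= u t) /\
  (nondecr0 phi1 /\ nondecr0 phi2 /\ phi1 0 = 0 /\ phi2 0 = 0) /\
  (stieltjes_int_zero (rcpart phi1)
     (fun s => Num.min (x s - l s) (rlim x s - rlim l s)) /\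
   stieltjes_int_zero (rcpart phi2)
     (fun s => Num.min (u s - x s) (rlim u s - rlim x s))) /\
  (forall t, 0 <= t ->
     sum_upto_zero (fun s => (rlim x s - rlim l s) * dplus phi1 s) t /\
     sum_upto_zero (fun s => (u s - x s) * dplus phi1 s) t /\
     sum_upto_zero (fun s => (rlim u s - rlim x s) * dplus phi2 s) t /\
     sum_upto_zero (fun s => (x s - l s) * dplus phi2 s) t).

Definition jumpset (phi : R -> R) : set R :=
  [set t | 0 <= t /\ 0 < dplus phi t].

End Defs.

(** If [phi1] jumps at [t] then (v) pins the solution to the upper barrier at
    [t] and to the lower one just after [t]; if [phi2] jumps as well, it is
    also pinned to the lower barrier at [t], which is impossible since
    [l t < u t].  For the invariance of the jump sets, the increment of any
    solution over [[t, t+]] is that of [y] plus the jump of [phi1] minus the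
    jump of [phi2].  When [phi1] jumps at [t], the increment of [x] is
    [l_{t+} - u_t], the smallest one compatible with the constraints; a second
    solution whose [phi1] does not jump at [t] would have an increment at most
    that of [y], which is strictly smaller, hence outside the constraints. *)

From HB Require Import structures.
From mathcomp Require Import all_boot all_order all_algebra.
From mathcomp Require Import all_classical all_reals all_analysis.
From mathcomp Require Import lra.
Import Order.TTheory GRing.Theory Num.Theory.
Import numFieldNormedType.Exports.
Local Open Scope classical_set_scope.
Local Open Scope ring_scope.

Section reflection_jumps.
Set Implicit Arguments. Unset Strict Implicit.
Variable R : realType.
Implicit Types (f g h : R -> R) (s t : R).

Lemma sum_upto_zero_le0 h t s :
  sum_upto_zero h t -> 0 <= s -> s <= t -> h s <= 0.
Proof.
move=> h0 s0 st; suff : ((h s)%:E <= 0)%E by rewrite lee_fin.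
rewrite -h0; apply: esum_ge; exists [set s]; last by rewrite fsbig_set1.
split; first exact: finite_set1.
by move=> _ ->; rewrite /itv_cc /= in_itv /= s0 st.
Qed.

Lemma sum_upto_zero_jump {f g : R -> R} t :
  sum_upto_zero (fun s => f s * g s) t -> 0 <= t -> 0 < g t -> f t <= 0.
Proof.
by move=> h0 t0 gt0; rewrite -(pmulr_lle0 _ gt0); exact: sum_upto_zero_le0 h0 t0 _.
Qed.

Lemma nondecr0_cvg_at_right f t : nondecr0 f -> 0 <= t -> cvg (f @ at_right t).
Proof.
move=> f_nd t0; apply: nondecreasing_at_right_is_cvgr.
  near=> b => r s; rewrite !in_itv /= => /andP[tr _] /andP[ts _] rs.
  by apply: f_nd => //; rewrite (le_trans t0) // ltW.
near=> b; exists (f t) => z [r]; rewrite /= in_itv /= => /andP[tr _] <-.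
by apply: f_nd => //; exact: ltW.
Unshelve. all: by end_near. Qed.

Lemma nondecr0_dplus_ge0 f t : nondecr0 f -> 0 <= t -> 0 <= dplus f t.
Proof.
move=> f_nd t0; rewrite /dplus subr_ge0.
apply: limr_ge; first exact: nondecr0_cvg_at_right.
by near=> s; apply: f_nd.
Unshelve. all: by end_near. Qed.

Lemma ler_rlim f g t : cvg (f @ at_right t) -> cvg (g @ at_right t) ->
  (forall s, t < s -> f s <= g s) -> rlim f t <= rlim g t.
Proof.
move=> cf cg fg; apply: ler_lim => //.
near=> s; apply: fg; near: s; exact: nbhs_right_gt.
Unshelve. all: by end_near. Qed.

Lemma dplus_addr_subr f g h1 h2 t : 0 <= t ->
  (forall s, 0 <= s -> f s = g s + (h1 s - h2 s)) ->
  cvg (g @ at_right t) -> cvg (h1 @ at_right t) -> cvg (h2 @ at_right t) ->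
  dplus f t = dplus g t + (dplus h1 t - dplus h2 t).
Proof.
move=> t0 fE cg ch1 ch2; rewrite /dplus fE //.
suff -> : rlim f t = rlim g t + (rlim h1 t - rlim h2 t) by lra.
apply: cvg_lim => //; apply: cvg_trans (cvgD cg (cvgB ch1 ch2)).
apply: near_eq_cvg; near=> s; rewrite /= fE // ltW // (le_lt_trans t0) //.
Unshelve. all: by end_near. Qed.

Lemma inf_gap_lt (l u : R -> R) :
  (forall t, 0 <= t -> l t <= u t) ->
  (forall t, 0 <= t -> 0 < inf [set u s - l s | s in `[0, t]]) ->
  forall t, 0 <= t -> l t < u t.
Proof.
move=> lu gap t t0; rewrite -subr_gt0; apply: lt_le_trans (gap t t0) _.
apply: ge_inf.
  by exists 0 => z [s]; rewrite /= in_itv /= => /andP[s0 _] <-; rewrite subr_ge0 lu.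
by exists t; rewrite //= in_itv /= t0 lexx.
Qed.

Section solution.
Variables (y l u x k phi1 phi2 : R -> R).
Hypothesis sol : RP_sol y l u x k phi1 phi2.

Lemma RP_sol_bounds t : 0 <= t -> l t <= x t <= u t.
Proof. by case: sol => _ [_ [lxu _]] t0; have [-> ->] := lxu t t0. Qed.

Lemma RP_sol_dplus_ge0 t : 0 <= t -> 0 <= dplus phi1 t /\ 0 <= dplus phi2 t.
Proof.
case: sol => _ [_ [_ [[nd1 [nd2 _]] _]]] t0.
by split; apply: nondecr0_dplus_ge0.
Qed.

Lemma RP_sol_dplus t : regulated y -> 0 <= t ->
  dplus x t = dplus y t + (dplus phi1 t - dplus phi2 t).
Proof.
case: sol => _ [xE [_ [[nd1 [nd2 _]] _]]] ry t0.
apply: dplus_addr_subr => //; last 2 first.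
- exact: nondecr0_cvg_at_right.
- exact: nondecr0_cvg_at_right.
- by move=> s s0; have [-> ->] := xE s s0.
- exact: ry.1.
Qed.

Lemma RP_sol_rlim_bounds t : regulated l -> regulated u -> 0 <= t ->
  rlim l t <= rlim x t <= rlim u t.
Proof.
case: sol => [[[rx _] _] _] rl ru t0.
have bnd s : t < s -> l s <= x s <= u s.
  by move=> ts; apply: RP_sol_bounds; rewrite (le_trans t0) // ltW.
apply/andP; split; apply: ler_rlim.
- exact: rl.1.
- exact: rx.
- by move=> s /bnd/andP[].
- exact: rx.
- exact: ru.1.
- by move=> s /bnd/andP[].
Qed.

Lemma jumpset1_boundary t : jumpset phi1 t -> rlim x t <= rlim l t /\ u t <= x t.
Proof.
case: sol => _ [_ [_ [_ [_ pinned]]]] [t0 j1].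
have [pin_l [pin_u _]] := pinned t t0.
have := sum_upto_zero_jump pin_l t0 j1; have := sum_upto_zero_jump pin_u t0 j1.
by split; lra.
Qed.

Lemma jumpset2_boundary t : jumpset phi2 t -> rlim u t <= rlim x t /\ x t <= l t.
Proof.
case: sol => _ [_ [_ [_ [_ pinned]]]] [t0 j2].
have [_ [_ [pin_u pin_l]]] := pinned t t0.
have := sum_upto_zero_jump pin_l t0 j2; have := sum_upto_zero_jump pin_u t0 j2.
by split; lra.
Qed.

Lemma jumpset_disjoint : (forall t, 0 <= t -> l t < u t) ->
  jumpset phi1 `&` jumpset phi2 = set0.
Proof.
move=> gap; apply/seteqP; split => // t [J1 J2].
have [_ ux] := jumpset1_boundary J1; have [_ xl] := jumpset2_boundary J2.
by have := gap t J1.1; lra.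
Qed.

End solution.

Section two_solutions.
Variables (y l u x k phi1 phi2 xt kt phit1 phit2 : R -> R).
Hypotheses (ry : regulated y) (rl : regulated l) (ru : regulated u).
Hypothesis gap : forall t, 0 <= t -> l t < u t.
Hypotheses (sol : RP_sol y l u x k phi1 phi2)
  (solt : RP_sol y l u xt kt phit1 phit2).

Lemma jumpset1_sub : jumpset phi1 `<=` jumpset phit1.
Proof.
move=> t J1; have t0 := J1.1; split => //; rewrite ltNge; apply/negP => no_jump.
have no_jump2 : dplus phi2 t <= 0.
  rewrite leNgt; apply/negP => j2.
  by rewrite -[False]/(set0 t) -(jumpset_disjoint sol gap).
have [_ djump2] := RP_sol_dplus_ge0 solt t0.
have [? ?] := jumpset1_boundary sol J1.
have /andP[? _] := RP_sol_rlim_bounds solt rl ru t0.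
have /andP[_ ?] := RP_sol_bounds solt t0.
have := RP_sol_dplus sol ry t0; have := RP_sol_dplus solt ry t0.
by move: J1.2; rewrite /dplus in no_jump no_jump2 djump2 *; lra.
Qed.

Lemma jumpset2_sub : jumpset phi2 `<=` jumpset phit2.
Proof.
move=> t J2; have t0 := J2.1; split => //; rewrite ltNge; apply/negP => no_jump.
have no_jump1 : dplus phi1 t <= 0.
  rewrite leNgt; apply/negP => j1.
  by rewrite -[False]/(set0 t) -(jumpset_disjoint sol gap).
have [djump1 _] := RP_sol_dplus_ge0 solt t0.
have [? ?] := jumpset2_boundary sol J2.
have /andP[_ ?] := RP_sol_rlim_bounds solt rl ru t0.
have /andP[? _] := RP_sol_bounds solt t0.
have := RP_sol_dplus sol ry t0; have := RP_sol_dplus solt ry t0.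
by move: J2.2; rewrite /dplus in no_jump no_jump1 djump1 *; lra.
Qed.

End two_solutions.

End reflection_jumps.

Theorem lemma1 (R : realType) (y l u x k phi1 phi2 xt kt phit1 phit2 : R -> R) :
  regulated y -> regulated l -> regulated u ->
  (forall t, 0 <= t -> l t <= u t) ->
  l 0 <= y 0 -> y 0 <= u 0 ->
  (forall t, 0 <= t -> 0 < inf [set u s - l s | s in `[0, t]]) ->
  RP_sol y l u x k phi1 phi2 ->
  RP_sol y l u xt kt phit1 phit2 ->
  (jumpset phi1 `&` jumpset phi2 = set0) /\
  (jumpset phi1 = jumpset phit1 /\ jumpset phi2 = jumpset phit2).
Proof.
move=> ry rl ru lu _ _ gap_inf sol solt.
have gap := inf_gap_lt lu gap_inf.
split; first exact: jumpset_disjoint sol gap.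
by split; apply/seteqP; split; [ exact: jumpset1_sub sol solt
  | exact: jumpset1_sub solt sol | exact: jumpset2_sub sol solt
  | exact: jumpset2_sub solt sol ].
Qed.
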